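(* Let $p$ be prime with $X_0(p)$ of genus $g\ge1$. For $q,q'\in D(0,0.01)$ one has $|\mu_\infty(q')-\mu_\infty(q)|_\infty\le 7|q'-q|$, and for $q,q'\in D(0,1-\frac{1}{2p})$ one has $|\mu_0(q')-\mu_0(q)|_\infty\le 96p^4|q'-q|$. In particular the Jacobi integration map is Lipschitz on $D_\infty=D(0,0.005)$ with constant at most $7$ and on $D_0=D(0,1-1/p)$ with constant at most $96p^4$.
   Context: For $\tau$ in the upper half plane put $q_\infty=\exp(2i\pi\tau)$, $q_0=\exp(-2i\pi/(p\tau))$. $\mathcal D_1$ is the set of differentials $\omega=f(q)\,dq/q$ on $X_0(p)$, with $f=\sum_{k\ge1}a_kq^k$ running over the weight-2 cusp forms on $\Gamma_0(p)$ that are Hecke eigenforms with $a_1=1$; each such $\omega$ equals $\frac{f(q_\infty)}{q_\infty}dq_\infty$ and also $\pm\frac{f(q_0)}{q_0}dq_0$ (Atkin–Lehner eigenvalue $\pm1$). The Jacobi maps on the discs are $\mu_\infty(q)=(\int^{q}\omega)_{\omega\in\mathcal D_1}$ (integration in the coordinate $q_\infty$) and $\mu_0(q)=(\int^{q}\omega)_{\omega\in\mathcal D_1}$ (integration in the coordinate $q_0$), defined up to a common additive constant (choice of a base point); so $\mu_\infty(q')-\mu_\infty(q)=(\int_q^{q'}\frac{f(t)}{t}dt)_\omega$, and similarly for $\mu_0$ with the signs $\pm$. $\mathbb C^{\mathcal D_1}$ carries the sup norm $|\cdot|_\infty$ in its canonical basis. *)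

From Stdlib Require Import Reals ZArith Znumtheory Arith.
From Stdlib Require Import ClassicalDescription.
From Coquelicot Require Import Coquelicot.
Open Scope R_scope.

Definition cexp (z : C) : C := (exp (Re z) * cos (Im z), exp (Re z) * sin (Im z)).

Definition csum (u : nat -> C) : C := (Series (fun k => Re (u k)), Series (fun k => Im (u k))).

Open Scope C_scope.
Definition q_inf (tau : C) : C := cexp (2 * PI * Ci * tau).

Definition fH (a : nat -> C) (tau : C) : C := csum (fun k => a k * (q_inf tau) ^ k).

(** Weight-2 cusp form on Gamma_0(p), given by its q-expansion at infinity. *)
Definition is_cusp_form_wt2 (p : nat) (a : nat -> C) : Prop :=
  a 0%nat = 0 /\
  (forall q : C, (Cmod q < 1)%R -> ex_series (fun k => a k * q ^ k)) /\
  (forall (A B Cc D : Z), (A * D - B * Cc = 1)%Z -> Z.divide (Z.of_nat p) Cc ->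
     forall tau : C, (0 < Im tau)%R ->
       fH a ((IZR A * tau + IZR B) / (IZR Cc * tau + IZR D))
       = (IZR Cc * tau + IZR D) ^ 2 * fH a tau) /\
  (* vanishing at the cusp 0 (width p): tau^{-2} f(-1/tau) = sum_{k>=1} b_k exp(2 i pi k tau / p) *)
  (exists b : nat -> C, b 0%nat = 0 /\
     forall tau : C, (0 < Im tau)%R ->
       is_series (fun k => b k * (cexp (2 * PI * Ci * tau / INR p)) ^ k)
                 (fH a (- / tau) / tau ^ 2)).

(** Coefficient n of T_l f (l prime): T_l for l not dividing p, U_p for l = p. *)
Definition hecke_coef (p l : nat) (a : nat -> C) (n : nat) : C :=
  a (n * l)%nat +
  (if (Nat.eqb (p mod l) 0) then 0
   else if Nat.eqb (n mod l) 0 then INR l * a (n / l)%nat else 0).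

Definition is_D1 (p : nat) (a : nat -> C) : Prop :=
  is_cusp_form_wt2 p a /\ a 1%nat = 1 /\
  (forall l : nat, prime (Z.of_nat l) ->
     exists lam : C, forall n : nat, hecke_coef p l a n = lam * a n).

(** Genus of X_0(p), p prime: 12 g = (p+1) - 3 nu_2 - 4 nu_3. *)
Definition nu2 (p : nat) : nat :=
  if Nat.eqb p 2 then 1 else if Nat.eqb (p mod 4) 1 then 2 else 0.
Definition nu3 (p : nat) : nat :=
  if Nat.eqb p 3 then 1 else if Nat.eqb (p mod 3) 1 then 2 else 0.
Definition genus_X0 (p : nat) : nat := ((p + 1 - 3 * nu2 p - 4 * nu3 p) / 12)%nat.

(** Jacobi map components (base point 0): the primitive of f(t)/t dt in the
    coordinate q_oo, i.e. sum_{k>=1} a_k q^k / k. *)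
Definition mu_inf (a : nat -> C) (q : C) : C := csum (fun k => a k / INR k * q ^ k).

(** Atkin-Lehner sign: omega = eps * f(q_0)/q_0 dq_0, i.e.
    f(-1/(p tau)) = eps * p * tau^2 * f(tau). *)
Definition al_sign (p : nat) (a : nat -> C) : R :=
  if excluded_middle_informative
       (forall tau : C, (0 < Im tau)%R ->
          fH a (- / (INR p * tau)) = INR p * tau ^ 2 * fH a tau)
  then 1%R else (-1)%R.

(** Component of mu_0: integration of omega = eps f(q_0)/q_0 dq_0 in the coordinate q_0. *)
Definition mu_0 (p : nat) (a : nat -> C) (q : C) : C :=
  al_sign p a * csum (fun k => a k / INR k * q ^ k).

(* The function y |f(x + i y)| is
   Gamma_0(p)-invariant, and it is bounded: every point of the upper half plane is
   Gamma_0(p)-equivalent to a point near one of the two cusps, where the q-expansions of f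
   decay like y e^(-c y). Since T_l f averages f over the l points (tau + j) / l and adds
   l f(l tau), comparing suprema gives |lambda_l| <= l + 1, and the Hecke recursion then gives
   |a_n| <= n^2. So the coefficients a_k / k of the Jacobi map are at most k in modulus, and on
   the disc of radius r it is Lipschitz with constant sum k^2 r^(k-1) = (1 + r) / (1 - r)^3,
   which is at most 7 for r < 1/100 and at most 96 p^4 for r < 1 - 1/(2p). *)

From Stdlib Require Import Reals ZArith Znumtheory Lia Lra Psatz.
From Stdlib Require Import Classical ClassicalDescription.
From Coquelicot Require Import Coquelicot.
Open Scope R_scope.

(** * Complex exponential and series *)

(* Goals produced by [is_series_ext] and friends are stated in [NormedModule.sort _] or
   [AbelianMonoid.sort _], which [ring] and [field] do not recognize as [C] or [R]. *)
Ltac eq_as T := match goal with |- ?x = ?y => change (@eq T x y) end.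

Lemma C_ext (z w : C) : Re z = Re w -> Im z = Im w -> z = w.
Proof. destruct z, w; unfold Re, Im; simpl; intros -> ->; reflexivity. Qed.

Lemma RtoC_INR_neq_0 (n : nat) : (0 < n)%nat -> RtoC (INR n) <> 0%C.
Proof. intros Hn H. apply (not_0_INR n); [lia|]. exact (f_equal Re H). Qed.

Lemma Cmod_INR (n : nat) : Cmod (RtoC (INR n)) = INR n.
Proof. rewrite Cmod_R. apply Rabs_pos_eq, pos_INR. Qed.

Lemma Im_div_R z r : r <> 0 -> Im (z / RtoC r)%C = Im z / r.
Proof. intros H. destruct z as [x y]. unfold Im, Cdiv, Cinv, Cmult; simpl. field. exact H. Qed.

Lemma Im_opp_inv (w : C) : w <> 0%C -> Im (- / w)%C = Im w / Cmod w ^ 2.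
Proof.
  intros H. assert (Hp : 0 < Cmod w ^ 2) by apply pow_lt, Cmod_gt_0, H.
  rewrite Cmod2_alt in *. destruct w as [x y]. simpl in *. field. lra.
Qed.

Lemma PI_gt_2 : 2 < PI.
Proof. pose proof PI2_1. lra. Qed.

Lemma exp_mPI_lt_half : exp (- PI) < 1 / 2.
Proof.
  rewrite exp_Ropp. pose proof (exp_ineq1_le PI). pose proof PI_gt_2. pose proof (exp_pos PI).
  apply (Rmult_lt_reg_r (exp PI)); [lra|]. rewrite Rinv_l; lra.
Qed.

Lemma exp_le x y : x <= y -> exp x <= exp y.
Proof. intros [H | ->]; [left; apply exp_increasing, H | right; reflexivity]. Qed.

Lemma mul_exp_neg_le y c : 0 < c -> 0 < y -> y * exp (- c * y) <= / c.
Proof.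
  intros Hc Hy. pose proof (exp_ineq1_le (c * y)) as H.
  replace (- c * y) with (- (c * y)) by ring. rewrite exp_Ropp.
  assert (Hp : 0 < exp (c * y)) by apply exp_pos.
  apply (Rmult_le_reg_r (c * exp (c * y))); [apply Rmult_lt_0_compat; lra|].
  replace (y * / exp (c * y) * (c * exp (c * y))) with (c * y) by (field; lra).
  replace (/ c * (c * exp (c * y))) with (exp (c * y)) by (field; lra). lra.
Qed.

Lemma Cmod_cexp z : Cmod (cexp z) = exp (Re z).
Proof.
  unfold cexp, Cmod; cbn [fst snd].
  replace ((exp (Re z) * cos (Im z)) ^ 2 + (exp (Re z) * sin (Im z)) ^ 2)
    with (exp (Re z) ^ 2)
    by (rewrite <- (Rmult_1_r (exp (Re z) ^ 2)), <- (sin2_cos2 (Im z)); unfold Rsqr; ring).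
  apply sqrt_pow2, Rlt_le, exp_pos.
Qed.

Lemma cexp_add z w : cexp (z + w) = (cexp z * cexp w)%C.
Proof.
  destruct z, w. unfold cexp; apply C_ext; simpl; rewrite exp_plus, ?cos_plus, ?sin_plus; ring.
Qed.

Lemma q_inf_add x y : q_inf (x + y) = (q_inf x * q_inf y)%C.
Proof. unfold q_inf. rewrite <- cexp_add. f_equal. ring. Qed.

Lemma q_inf_real (x : R) : q_inf x = (cos (2 * PI * x), sin (2 * PI * x)).
Proof.
  unfold q_inf, cexp.
  replace (Re (2 * PI * Ci * x)) with 0 by (simpl; ring).
  replace (Im (2 * PI * Ci * x)) with (2 * PI * x) by (simpl; ring).
  rewrite exp_0. apply C_ext; simpl; ring.
Qed.

Lemma q_inf_pow x n : (q_inf x ^ n)%C = q_inf (INR n * x).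
Proof.
  induction n as [|n IH].
  - rewrite Cmult_0_l, q_inf_real, Rmult_0_r, cos_0, sin_0. reflexivity.
  - rewrite Cpow_S, IH, <- q_inf_add, S_INR, RtoC_plus. f_equal. ring.
Qed.

Lemma Cmod_q_inf tau : Cmod (q_inf tau) = exp (- 2 * PI * Im tau).
Proof. unfold q_inf. rewrite Cmod_cexp. f_equal. destruct tau; simpl; ring. Qed.

Lemma Cmod_q_inf_lt_1 tau : 0 < Im tau -> Cmod (q_inf tau) < 1.
Proof.
  intros H. rewrite Cmod_q_inf, <- exp_0. apply exp_increasing.
  pose proof PI_RGT_0. nra.
Qed.

Lemma q_inf_nat (m : nat) : q_inf (INR m) = 1%C.
Proof.
  rewrite q_inf_real. replace (2 * PI * INR m) with (0 + 2 * INR m * PI) by ring.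
  rewrite cos_period, sin_period, cos_0, sin_0. reflexivity.
Qed.

Lemma q_inf_frac_neq_1 (r l : nat) : (0 < r < l)%nat -> q_inf (RtoC (INR r / INR l)) <> 1%C.
Proof.
  intros Hrl H. rewrite q_inf_real in H.
  assert (Hr : 0 < INR r / INR l < 1).
  { assert (0 < INR r < INR l) by (split; [apply lt_0_INR | apply lt_INR]; lia).
    split; [apply Rdiv_lt_0_compat | rewrite <- Rdiv_lt_1]; lra. }
  destruct (sin_eq_0_0 _ (f_equal Im H)) as [k Hk].
  assert (Hk1 : IZR k = 2 * (INR r / INR l)).
  { pose proof PI_RGT_0. apply (Rmult_eq_reg_r PI); [rewrite <- Hk; ring | lra]. }
  assert (k = 1%Z) as ->.
  { assert (0 < k < 2)%Z by (split; apply lt_IZR; lra). lia. }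
  pose proof (f_equal Re H) as Hc. simpl in Hc.
  rewrite Hk, Rmult_1_l, cos_PI in Hc. lra.
Qed.

Lemma filterlim_Re (z : C) : filterlim Re (locally z) (locally (Re z)).
Proof. intros P [eps HP]. exists eps. intros w Hw. apply HP, Hw. Qed.

Lemma filterlim_Im (z : C) : filterlim Im (locally z) (locally (Im z)).
Proof. intros P [eps HP]. exists eps. intros w Hw. apply HP, Hw. Qed.

Lemma Re_sum_n (u : nat -> C) n : Re (sum_n u n) = sum_n (fun k => Re (u k)) n.
Proof. induction n; [rewrite !sum_O | rewrite !sum_Sn, <- IHn]; reflexivity. Qed.

Lemma Im_sum_n (u : nat -> C) n : Im (sum_n u n) = sum_n (fun k => Im (u k)) n.
Proof. induction n; [rewrite !sum_O | rewrite !sum_Sn, <- IHn]; reflexivity. Qed.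

Lemma is_series_Re (u : nat -> C) l : is_series u l -> is_series (fun k => Re (u k)) (Re l).
Proof.
  intros H. apply (filterlim_ext (fun n => Re (sum_n u n))); [intros n; apply Re_sum_n|].
  exact (filterlim_comp _ _ _ (sum_n u) Re eventually _ _ H (filterlim_Re l)).
Qed.

Lemma is_series_Im (u : nat -> C) l : is_series u l -> is_series (fun k => Im (u k)) (Im l).
Proof.
  intros H. apply (filterlim_ext (fun n => Im (sum_n u n))); [intros n; apply Im_sum_n|].
  exact (filterlim_comp _ _ _ (sum_n u) Im eventually _ _ H (filterlim_Im l)).
Qed.

Lemma csum_unique (u : nat -> C) l : is_series u l -> csum u = l.
Proof.
  intros H. unfold csum. apply C_ext; simpl; apply is_series_unique.
  - exact (is_series_Re u l H).
  - exact (is_series_Im u l H).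
Qed.

Lemma csum_correct (u : nat -> C) : ex_series u -> is_series u (csum u).
Proof. intros [l Hl]. rewrite (csum_unique u l Hl). exact Hl. Qed.

Lemma is_series_C_unique (u : nat -> C) l1 l2 : is_series u l1 -> is_series u l2 -> l1 = l2.
Proof. intros H1 H2. rewrite <- (csum_unique u l1 H1). exact (csum_unique u l2 H2). Qed.

Lemma Cmod_sum_n_le (u : nat -> C) n : Cmod (sum_n u n) <= sum_n (fun k => Cmod (u k)) n.
Proof.
  induction n; rewrite ?sum_O, ?sum_Sn; [lra|].
  eapply Rle_trans; [apply Cmod_triangle|]. simpl. unfold plus; simpl. lra.
Qed.

Lemma Cmod_series_le (u : nat -> C) (v : nat -> R) l B :
  is_series u l -> (forall k, Cmod (u k) <= v k) -> (forall n, sum_n v n <= B) -> Cmod l <= B.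
Proof.
  intros Hu Huv HB.
  assert (Hlim : is_lim_seq (fun n => Cmod (sum_n u n)) (Cmod l))
    by exact (filterlim_comp _ _ _ (sum_n u) _ eventually _ _ Hu
                (filterlim_norm (V := C_NormedModule) l)).
  refine (is_lim_seq_le _ _ _ _ _ Hlim (is_lim_seq_const B)). intros n.
  eapply Rle_trans; [apply Cmod_sum_n_le|].
  eapply Rle_trans; [apply sum_n_m_le, Huv | apply HB].
Qed.

Lemma sum_n_le_Series (v : nat -> R) n :
  (forall k, 0 <= v k) -> ex_series v -> sum_n v n <= Series v.
Proof.
  intros Hv Hs. apply (is_lim_seq_incr_compare (sum_n v)); [exact (Series_correct _ Hs)|].
  intros m. rewrite sum_Sn. specialize (Hv (S m)). unfold plus; simpl; lra.
Qed.

Lemma ex_series_nonneg_bounded (v : nat -> R) B :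
  (forall k, 0 <= v k) -> (forall n, sum_n v n <= B) -> ex_series v.
Proof.
  intros Hv HB. apply ex_series_Reals_1, growing_cv.
  - intros n. rewrite <- !sum_n_Reals, sum_Sn. specialize (Hv (S n)). unfold plus; simpl; lra.
  - exists B. intros x [n ->]. rewrite <- sum_n_Reals. apply HB.
Qed.

Lemma series_terms_bounded (u : nat -> C) : ex_series u -> exists M, forall k, Cmod (u k) <= M.
Proof.
  intros Hu. destruct (filterlim_bounded (sum_n u) Hu) as [M HM].
  exists (2 * M). intros [|k].
  - pose proof (HM 0%nat) as H0. rewrite sum_O in H0.
    pose proof (Cmod_ge_0 (u 0%nat)). change (Cmod (u 0%nat) <= M) in H0. lra.
  - replace (u (S k)) with (sum_n u (S k) - sum_n u k)%C
      by (rewrite sum_Sn; change (plus (sum_n u k) (u (S k))) with (sum_n u k + u (S k))%C; ring).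
    eapply Rle_trans; [apply Cmod_triangle|]. rewrite Cmod_opp.
    pose proof (HM (S k)). pose proof (HM k). change (norm ?x) with (Cmod x) in *. lra.
Qed.

Lemma ex_series_abs_shifted (c : nat -> C) (d : nat) (z : C) (rho : R) :
  ex_series (fun k => (c k * z ^ k)%C) -> (forall k, (k < d)%nat -> c k = 0%C) ->
  0 < rho < Cmod z -> ex_series (fun k => Cmod (c k) * rho ^ (k - d)).
Proof.
  intros Hz Hc Hrho.
  destruct (series_terms_bounded _ Hz) as [M HM].
  assert (HM0 : 0 <= M) by (pose proof (HM 0%nat); pose proof (Cmod_ge_0 (c 0%nat * z ^ 0)%C); lra).
  set (t := rho / Cmod z).
  assert (Ht : 0 < t < 1)
    by (unfold t; split; [apply Rdiv_lt_0_compat | rewrite <- Rdiv_lt_1]; lra).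
  assert (Hd : 0 < rho ^ d) by (apply pow_lt; lra).
  apply (@ex_series_le R_AbsRing R_CompleteNormedModule _ (fun k => t ^ k * (M / rho ^ d))).
  - intros k. change norm with Rabs.
    rewrite Rabs_pos_eq by (apply Rmult_le_pos; [apply Cmod_ge_0 | apply pow_le; lra]).
    destruct (Nat.lt_ge_cases k d) as [Hk | Hk].
    + rewrite (Hc k Hk), Cmod_0, Rmult_0_l.
      apply Rmult_le_pos; [apply pow_le; lra | apply Rdiv_le_0_compat; lra].
    + apply (Rmult_le_reg_l (rho ^ d)); [exact Hd|].
      replace (rho ^ d * (Cmod (c k) * rho ^ (k - d))) with (Cmod (c k) * rho ^ k)
        by (replace k with (d + (k - d))%nat at 2 by lia; rewrite pow_add; ring).
      replace (rho ^ d * (t ^ k * (M / rho ^ d))) with (M * t ^ k) by (field; lra).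
      replace rho with (t * Cmod z) by (unfold t; field; lra).
      specialize (HM k). rewrite Cmod_mult, Cmod_pow in HM. rewrite Rpow_mult_distr.
      pose proof (pow_le t k ltac:(lra)). nra.
  - apply ex_series_scal_r, ex_series_geom. rewrite Rabs_pos_eq; lra.
Qed.

Lemma pseries_vanishing_order_bound (c : nat -> C) (d : nat) (z : C) (rho : R) :
  ex_series (fun k => (c k * z ^ k)%C) -> (forall k, (k < d)%nat -> c k = 0%C) ->
  0 < rho < Cmod z ->
  exists K, 0 <= K /\ forall w l, Cmod w <= rho -> is_series (fun k => (c k * w ^ k)%C) l ->
    Cmod l <= K * Cmod w ^ d.
Proof.
  intros Hz Hc Hrho.
  set (v := fun k => Cmod (c k) * rho ^ (k - d)).
  assert (Hv0 : forall k, 0 <= v k)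
    by (intros k; apply Rmult_le_pos; [apply Cmod_ge_0 | apply pow_le; lra]).
  pose proof (ex_series_abs_shifted c d z rho Hz Hc Hrho) as Hv.
  exists (Series v). split.
  { apply (Rle_trans _ (sum_n v 0)); [rewrite sum_O; apply Hv0 |].
    apply sum_n_le_Series; assumption. }
  intros w l Hw Hl.
  apply (Cmod_series_le _ (fun k => Cmod w ^ d * v k) _ _ Hl).
  - intros k. rewrite Cmod_mult, Cmod_pow. pose proof (Cmod_ge_0 w).
    destruct (Nat.lt_ge_cases k d) as [Hk | Hk].
    + rewrite (Hc k Hk), Cmod_0, Rmult_0_l. apply Rmult_le_pos; [apply pow_le; lra | apply Hv0].
    + unfold v. replace k with (d + (k - d))%nat at 2 by lia. rewrite pow_add.
      assert (Cmod w ^ (k - d) <= rho ^ (k - d)) by (apply pow_incr; lra).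
      pose proof (Cmod_ge_0 (c k)). pose proof (pow_le (Cmod w) d ltac:(lra)).
      assert (Cmod (c k) * Cmod w ^ (k - d) <= Cmod (c k) * rho ^ (k - d))
        by (apply Rmult_le_compat_l; assumption).
      nra.
  - intros n. rewrite (sum_n_mult_l (K := R_Ring)). change (mult ?x ?y) with (x * y).
    rewrite (Rmult_comm (Series v)).
    apply Rmult_le_compat_l; [apply pow_le, Cmod_ge_0 | apply sum_n_le_Series; assumption].
Qed.

(** * Reduction theory for SL2(Z) and Gamma0(p) *)

Lemma exists_near_minimizer {T : Type} (P : T -> Prop) (Q : T -> R) (m0 : R) :
  0 < m0 -> (forall t, P t -> m0 <= Q t) -> (exists t, P t) ->
  exists t, P t /\ forall t', P t' -> Q t < 2 * Q t'.
Proof.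
  intros Hm0 HQ [t0 Ht0].
  (* with [m := inf Q > 0] (here [m = - s]), any [t] with [Q t < 2 m] will do *)
  set (E := fun x => exists t, P t /\ x = - Q t).
  assert (HE : bound E) by (exists (- m0); intros x [t [Ht ->]]; specialize (HQ t Ht); lra).
  destruct (completeness E HE (ex_intro _ (- Q t0) (ex_intro _ t0 (conj Ht0 eq_refl))))
    as [s [Hub Hlub]].
  assert (Hs : s <= - m0) by (apply Hlub; intros x [t [Ht ->]]; specialize (HQ t Ht); lra).
  assert (Hinf : forall t, P t -> - s <= Q t)
    by (intros t Ht; assert (- Q t <= s) by (apply Hub; exists t; auto); lra).
  destruct (classic (exists t, P t /\ Q t < - 2 * s)) as [[t [Ht HQt]] | Hno].
  - exists t. split; [exact Ht|]. intros t' Ht'. specialize (Hinf t' Ht'). lra.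
  - exfalso. assert (s <= 2 * s); [|lra].
    apply Hlub. intros x [t [Ht ->]].
    destruct (Rle_or_lt (- 2 * s) (Q t)) as [H|H]; [lra|].
    exfalso. apply Hno. eauto.
Qed.

Definition moebius (A B Cc D : Z) (tau : C) : C :=
  ((IZR A * tau + IZR B) / (IZR Cc * tau + IZR D))%C.

Lemma det_IZR (A B Cc D : Z) : (A * D - B * Cc = 1)%Z -> IZR A * IZR D - IZR B * IZR Cc = 1.
Proof. intros H. rewrite <- !mult_IZR, <- minus_IZR, H. reflexivity. Qed.

Lemma moebius_den_neq_0 (A B Cc D : Z) tau : (A * D - B * Cc = 1)%Z -> 0 < Im tau ->
  (IZR Cc * tau + IZR D)%C <> 0%C.
Proof.
  intros Hd Hy Heq. apply det_IZR in Hd. destruct tau as [x y]. simpl in Hy.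
  pose proof (f_equal Re Heq) as HRe. pose proof (f_equal Im Heq) as HIm. simpl in HRe, HIm.
  assert (Hc : IZR Cc = 0) by nra.
  rewrite Hc in HRe, Hd. nra.
Qed.

Lemma Im_moebius (A B Cc D : Z) tau : (A * D - B * Cc = 1)%Z -> 0 < Im tau ->
  Im (moebius A B Cc D tau) = Im tau / Cmod (IZR Cc * tau + IZR D)%C ^ 2.
Proof.
  intros Hd Hy. pose proof (moebius_den_neq_0 A B Cc D tau Hd Hy) as Hn.
  assert (Hpos : 0 < Cmod (IZR Cc * tau + IZR D)%C ^ 2) by (apply pow_lt, Cmod_gt_0, Hn).
  apply det_IZR in Hd. rewrite Cmod2_alt in Hpos |- *.
  destruct tau as [x y]. unfold moebius. simpl in *.
  field_simplify; [| lra | lra].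
  replace (IZR A * y * IZR D - y * IZR B * IZR Cc) with (y * (IZR A * IZR D - IZR B * IZR Cc))
    by ring.
  rewrite Hd. f_equal. ring.
Qed.

Lemma Im_moebius_pos (A B Cc D : Z) tau : (A * D - B * Cc = 1)%Z -> 0 < Im tau ->
  0 < Im (moebius A B Cc D tau).
Proof.
  intros Hd Hy. rewrite (Im_moebius A B Cc D tau Hd Hy).
  apply Rdiv_lt_0_compat, pow_lt, Cmod_gt_0, (moebius_den_neq_0 A B); assumption.
Qed.

Lemma SL2Z_bottom_row_lower_bound (Cc D : Z) tau : (exists A B, (A * D - B * Cc = 1)%Z) ->
  Rmin (Im tau ^ 2) 1 <= Cmod (IZR Cc * tau + IZR D)%C ^ 2.
Proof.
  intros [A [B Hd]]. rewrite Cmod2_alt.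
  destruct tau as [x y].
  replace (Re _) with (IZR Cc * x + IZR D) by (simpl; ring).
  replace (Im (IZR Cc * (x, y) + IZR D)%C) with (IZR Cc * y) by (simpl; ring). simpl Im.
  pose proof (Rmin_l (y ^ 2) 1). pose proof (Rmin_r (y ^ 2) 1).
  destruct (Z.eq_dec Cc 0) as [->|Hc].
  - rewrite Z.mul_0_r, Z.sub_0_r, Z.mul_comm in Hd.
    assert (HD : IZR D ^ 2 = 1) by (destruct (Z.eq_mul_1 _ _ Hd) as [-> | ->]; simpl; ring).
    nra.
  - assert (Hc2 : 1 <= IZR Cc * IZR Cc) by (rewrite <- mult_IZR; apply IZR_le; nia).
    assert (y ^ 2 <= (IZR Cc * y) ^ 2).
    { replace ((IZR Cc * y) ^ 2) with (IZR Cc * IZR Cc * y ^ 2) by ring.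
      pose proof (pow2_ge_0 y). nra. }
    pose proof (pow2_ge_0 (IZR Cc * x + IZR D)). lra.
Qed.

Lemma SL2Z_reduction tau : 0 < Im tau ->
  exists A B Cc D : Z, (A * D - B * Cc = 1)%Z /\ 1 / 2 < Im (moebius A B Cc D tau).
Proof.
  intros Hy.
  set (Q := fun cd : Z * Z => Cmod (IZR (fst cd) * tau + IZR (snd cd))%C ^ 2).
  set (P := fun cd : Z * Z => exists A B, (A * snd cd - B * fst cd = 1)%Z).
  destruct (exists_near_minimizer P Q (Rmin (Im tau ^ 2) 1)) as [[Cc D] [[A [B Hd]] Hmin]].
  - apply Rmin_glb_lt; [apply pow_lt|]; lra.
  - intros [c d] Hcd. apply SL2Z_bottom_row_lower_bound, Hcd.
  - exists (0, 1)%Z, 1%Z, 0%Z. reflexivity.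
  - cbn [fst snd] in Hd. exists A, B, Cc, D. split; [exact Hd|].
    set (z := moebius A B Cc D tau).
    set (k := (up (Re z + / 2) - 1)%Z).
    assert (Hk : Re z - / 2 < IZR k <= Re z + / 2)
      by (destruct (archimed (Re z + / 2)); unfold k; rewrite minus_IZR; lra).
    assert (Hn := moebius_den_neq_0 A B Cc D tau Hd Hy).
    (* [z - k] is the image of [tau] under a matrix with bottom row [(A - k Cc, B - k D)],
       so near-minimality of [(Cc, D)] forces [|z - k|^2 > 1/2] *)
    assert (Hdk : (- Cc * (B - k * D) - - D * (A - k * Cc) = 1)%Z) by (rewrite <- Hd; ring).
    specialize (Hmin (A - k * Cc, B - k * D)%Z (ex_intro _ _ (ex_intro _ _ Hdk))).
    unfold Q in Hmin. cbn [fst snd] in Hmin.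
    replace (IZR (A - k * Cc) * tau + IZR (B - k * D))%C
      with ((z - IZR k) * (IZR Cc * tau + IZR D))%C in Hmin
      by (unfold z, moebius; rewrite !minus_IZR, !mult_IZR, !RtoC_minus, !RtoC_mult;
          field; exact Hn).
    rewrite Cmod_mult, Rpow_mult_distr in Hmin.
    assert (Hpos : 0 < Cmod (IZR Cc * tau + IZR D)%C ^ 2) by (apply pow_lt, Cmod_gt_0, Hn).
    assert (Hzk : 1 / 2 < Cmod (z - IZR k)%C ^ 2) by nra.
    assert (0 < Im z) by apply (Im_moebius_pos A B Cc D tau Hd Hy).
    clearbody z. rewrite Cmod2_alt in Hzk.
    replace (Re (z - IZR k)%C) with (Re z - IZR k) in Hzk by (unfold Re, Im; simpl; ring).
    replace (Im (z - IZR k)%C) with (Im z) in Hzk by (unfold Re, Im; simpl; ring).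
    nra.
Qed.

(** * Growth of a cusp form *)

Lemma Cmod_q_inf_div tau h : 0 < h -> Cmod (q_inf (tau / RtoC h)) = exp (- (2 * PI / h) * Im tau).
Proof. intros Hh. rewrite Cmod_q_inf, Im_div_R by lra. f_equal. field. lra. Qed.

Lemma cusp_expansion_bound (c : nat -> C) (h : R) (F : C -> C) :
  0 < h -> c 0%nat = 0%C ->
  (forall tau, 0 < Im tau -> is_series (fun k => (c k * q_inf (tau / RtoC h) ^ k)%C) (F tau)) ->
  exists M, forall tau, 1 / 2 <= Im tau -> Im tau * Cmod (F tau) <= M.
Proof.
  intros Hh Hc0 HF.
  assert (Hc : 0 < 2 * PI / h) by (apply Rdiv_lt_0_compat; [pose proof PI_RGT_0|]; lra).
  set (tau0 := (0, / 4) : C).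
  set (rho := exp (- (2 * PI / h) * / 2)).
  assert (Hrho : 0 < rho < Cmod (q_inf (tau0 / RtoC h))).
  { split; [apply exp_pos|]. rewrite Cmod_q_inf_div by exact Hh.
    apply exp_increasing. simpl. nra. }
  destruct (pseries_vanishing_order_bound c 1 _ rho (ex_intro _ _ (HF tau0 ltac:(simpl; lra))))
    as [K [HK HKb]]; [intros k Hk; replace k with 0%nat by lia; exact Hc0 | exact Hrho |].
  exists (K * / (2 * PI / h)). intros tau Hy.
  assert (Hq : Cmod (q_inf (tau / RtoC h)) <= rho).
  { rewrite Cmod_q_inf_div by exact Hh. apply exp_le. nra. }
  specialize (HKb _ _ Hq (HF tau ltac:(lra))).
  rewrite pow_1, Cmod_q_inf_div in HKb by exact Hh.
  pose proof (mul_exp_neg_le (Im tau) _ Hc ltac:(lra)).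
  pose proof (exp_pos (- (2 * PI / h) * Im tau)).
  apply Rle_trans with (Im tau * (K * exp (- (2 * PI / h) * Im tau)));
    [apply Rmult_le_compat_l; lra|].
  rewrite Rmult_comm, Rmult_assoc, (Rmult_comm _ (Im tau)).
  apply Rmult_le_compat_l; lra.
Qed.

Definition petersson_abs (a : nat -> C) (tau : C) : R := Im tau * Cmod (fH a tau).

Lemma fH_is_series p a tau : is_cusp_form_wt2 p a -> 0 < Im tau ->
  is_series (fun k => (a k * q_inf tau ^ k)%C) (fH a tau).
Proof.
  intros [_ [Hex _]] Hy. apply csum_correct, Hex, Cmod_q_inf_lt_1, Hy.
Qed.

Lemma petersson_abs_moebius p a (A B Cc D : Z) tau : is_cusp_form_wt2 p a ->
  (A * D - B * Cc = 1)%Z -> (Z.of_nat p | Cc)%Z -> 0 < Im tau ->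
  petersson_abs a (moebius A B Cc D tau) = petersson_abs a tau.
Proof.
  intros [_ [_ [Hmod _]]] Hd Hp Hy.
  unfold petersson_abs. rewrite (Im_moebius A B Cc D tau Hd Hy).
  unfold moebius. rewrite (Hmod A B Cc D Hd Hp tau Hy), Cmod_mult, Cmod_pow.
  assert (0 < Cmod (IZR Cc * tau + IZR D)%C)
    by (apply Cmod_gt_0, (moebius_den_neq_0 A B); assumption).
  field. lra.
Qed.

Lemma petersson_abs_bounded_at_inf p a : is_cusp_form_wt2 p a ->
  exists M, forall tau, 1 / 2 <= Im tau -> petersson_abs a tau <= M.
Proof.
  intros Hcf. pose proof Hcf as [Ha0 _].
  apply (cusp_expansion_bound a 1 (fH a)); [lra | exact Ha0|].
  intros tau Hy. replace (tau / RtoC 1)%C with tau by (field; apply C1_nz).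
  apply (fH_is_series p a tau Hcf Hy).
Qed.

Lemma petersson_abs_bounded_at_0 p a : is_cusp_form_wt2 p a -> (0 < p)%nat ->
  exists M, forall w, 1 / 2 <= Im w -> Im w * Cmod (fH a (- / w) / w ^ 2)%C <= M.
Proof.
  intros [_ [_ [_ [b [Hb0 Hb]]]]] Hp.
  apply (cusp_expansion_bound b (INR p)); [apply lt_0_INR, Hp | exact Hb0|].
  intros tau Hy. eapply is_series_ext; [| exact (Hb tau Hy)].
  intros k. unfold q_inf, Cdiv. do 3 f_equal. ring.
Qed.

Lemma Gamma0_reduction p tau : prime (Z.of_nat p) -> 0 < Im tau ->
  exists A B Cc D : Z, (A * D - B * Cc = 1)%Z /\ (Z.of_nat p | Cc)%Z /\
    (1 / 2 < Im (moebius A B Cc D tau) \/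
     exists w, 1 / 2 < Im w /\ w <> 0%C /\ moebius A B Cc D tau = (- / w)%C).
Proof.
  intros Hpr Hy.
  destruct (SL2Z_reduction tau Hy) as [A [B [Cc [D [Hd Hz]]]]].
  destruct (Zdivide_dec (Z.of_nat p) Cc) as [Hdiv | Hndiv].
  { exists A, B, Cc, D. auto. }
  apply (prime_rel_prime _ Hpr), rel_prime_bezout in Hndiv. destruct Hndiv as [u v Huv].
  (* [- / (z + j)] is the image of [tau] under [(- Cc, - D; A + j Cc, B + j D)], whose
     lower-left entry is divisible by [p] for this [j] *)
  set (j := (- (A * v))%Z).
  exists (- Cc)%Z, (- D)%Z, (A + j * Cc)%Z, (B + j * D)%Z. split; [|split].
  - rewrite <- Hd. ring.
  - exists (A * u)%Z. unfold j. rewrite <- (Z.mul_1_r A) at 1. rewrite <- Huv. ring.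
  - right. set (w := (moebius A B Cc D tau + IZR j)%C).
    assert (Hw : Im w = Im (moebius A B Cc D tau)) by (unfold w; rewrite im_plus, im_RtoC; ring).
    assert (Hw0 : w <> 0%C) by (intros H0; rewrite H0, im_RtoC in Hw; lra).
    exists w. split; [lra | split; [exact Hw0|]].
    assert (Hn := moebius_den_neq_0 A B Cc D tau Hd Hy).
    assert (Ew : w = ((IZR (A + j * Cc) * tau + IZR (B + j * D)) / (IZR Cc * tau + IZR D))%C).
    { unfold w, moebius. rewrite !plus_IZR, !mult_IZR, !RtoC_plus, !RtoC_mult. field. exact Hn. }
    assert (Hn' : (IZR (A + j * Cc) * tau + IZR (B + j * D))%C <> 0%C).
    { intros H0. apply Hw0. rewrite Ew, H0. unfold Cdiv. ring. }
    rewrite Ew. unfold moebius. rewrite !opp_IZR, !RtoC_opp. field. split; assumption.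
Qed.

Lemma petersson_abs_bounded p a : prime (Z.of_nat p) -> is_cusp_form_wt2 p a ->
  exists M, forall tau, 0 < Im tau -> petersson_abs a tau <= M.
Proof.
  intros Hpr Hcf.
  assert (Hp : (0 < p)%nat) by (pose proof (prime_ge_2 _ Hpr); lia).
  destruct (petersson_abs_bounded_at_inf p a Hcf) as [M1 HM1].
  destruct (petersson_abs_bounded_at_0 p a Hcf Hp) as [M2 HM2].
  exists (Rmax M1 M2). intros tau Hy.
  destruct (Gamma0_reduction p tau Hpr Hy)
    as [A [B [Cc [D [Hd [Hdiv [Hinf | [w [Hw [Hw0 Ew]]]]]]]]]];
    rewrite <- (petersson_abs_moebius p a A B Cc D tau Hcf Hd Hdiv Hy).
  - eapply Rle_trans; [apply HM1; lra | apply Rmax_l].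
  - rewrite Ew. unfold petersson_abs. rewrite Im_opp_inv by exact Hw0.
    replace (fH a (- / w)) with (w ^ 2 * (fH a (- / w) / w ^ 2))%C by (field; exact Hw0).
    rewrite Cmod_mult, Cmod_pow.
    assert (0 < Cmod w) by apply Cmod_gt_0, Hw0.
    replace (Im w / Cmod w ^ 2 * (Cmod w ^ 2 * Cmod (fH a (- / w) / w ^ 2)%C))
      with (Im w * Cmod (fH a (- / w) / w ^ 2)%C) by (field; lra).
    eapply Rle_trans; [apply HM2; lra | apply Rmax_r].
Qed.

Lemma is_series_single (m : nat) (x : C) : is_series (fun k => if Nat.eqb k m then x else RtoC 0) x.
Proof.
  set (u := fun k => if Nat.eqb k m then x else RtoC 0).
  assert (Hs : forall n, (m <= n)%nat -> sum_n u n = x).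
  { assert (Hlt : forall n, (n < m)%nat -> sum_n u n = RtoC 0).
    { induction n as [|n IH]; intros Hn.
      - rewrite sum_O. unfold u. destruct (Nat.eqb_spec 0 m); [lia | reflexivity].
      - rewrite sum_Sn, IH by lia. unfold u. destruct (Nat.eqb_spec (S n) m); [lia|].
        apply Cplus_0_r. }
    intros n Hn. induction Hn as [|n Hn IH].
    - destruct m as [|m]; rewrite ?sum_O, ?sum_Sn, ?Hlt by lia; unfold u; rewrite Nat.eqb_refl;
        [reflexivity | apply Cplus_0_l].
    - rewrite sum_Sn, IH. unfold u. destruct (Nat.eqb_spec (S n) m); [lia | apply Cplus_0_r]. }
  unfold is_series. apply (filterlim_ext_loc (fun _ => x)).
  - exists m. intros n Hn. symmetry. apply Hs, Hn.
  - apply filterlim_const.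
Qed.

Lemma petersson_abs_pos_somewhere p a : is_cusp_form_wt2 p a -> a 1%nat = 1%C ->
  exists tau, 0 < Im tau /\ 0 < petersson_abs a tau.
Proof.
  intros Hcf Ha1. pose proof Hcf as [Ha0 [Hex _]].
  (* [fH a tau - q] has a zero of order 2 at [q = 0] *)
  set (c := fun k => (a k - (if Nat.eqb k 1 then 1 else 0))%C).
  assert (Hc : forall w l, is_series (fun k => (a k * w ^ k)%C) l ->
            is_series (fun k => (c k * w ^ k)%C) (l - w)%C).
  { intros w l Hl.
    eapply is_series_ext; [| exact (is_series_minus _ _ _ _ Hl (is_series_single 1 w))].
    intros k. unfold c.
    change (a k * w ^ k - (if Nat.eqb k 1 then w else 0)
            = (a k - (if Nat.eqb k 1 then 1 else 0)) * w ^ k)%C.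
    destruct (Nat.eqb_spec k 1) as [-> |]; simpl; ring. }
  set (z := RtoC (1 / 2)).
  assert (Hz : Cmod z = 1 / 2) by (unfold z; rewrite Cmod_R, Rabs_pos_eq; lra).
  destruct (pseries_vanishing_order_bound c 2 z (exp (- PI))) as [K [HK HKb]].
  - destruct (Hex z ltac:(lra)) as [l Hl]. exists (l - z)%C. apply Hc, Hl.
  - intros k Hk. unfold c. destruct k as [|[|k]]; simpl; [rewrite Ha0 | rewrite Ha1 | lia]; ring.
  - rewrite Hz. split; [apply exp_pos | apply exp_mPI_lt_half].
  - set (tau := (0, K + 1) : C). set (q := q_inf tau).
    assert (Hy : Im tau = K + 1) by reflexivity.
    assert (Hq : Cmod q = exp (- 2 * PI * (K + 1)))
      by (unfold q; rewrite Cmod_q_inf, Hy; reflexivity).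
    assert (Hq_rho : Cmod q <= exp (- PI)) by (rewrite Hq; apply exp_le; pose proof PI_RGT_0; nra).
    assert (HKq : K * Cmod q < 1).
    { rewrite Hq. replace (- 2 * PI * (K + 1)) with (- (2 * PI * (K + 1))) by ring.
      rewrite exp_Ropp. pose proof (exp_ineq1_le (2 * PI * (K + 1))). pose proof PI_gt_2.
      apply (Rmult_lt_reg_r (exp (2 * PI * (K + 1)))); [apply exp_pos|].
      rewrite Rmult_assoc, Rinv_l by (apply Rgt_not_eq, exp_pos). nra. }
    specialize (HKb q _ Hq_rho (Hc q _ (fH_is_series p a tau Hcf ltac:(lra)))).
    assert (Htri : Cmod q <= Cmod (fH a tau) + Cmod (fH a tau - q)%C).
    { replace q with (fH a tau - (fH a tau - q))%C at 1 by ring.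
      eapply Rle_trans; [apply Cmod_triangle|]. rewrite Cmod_opp. lra. }
    assert (0 < Cmod q) by (rewrite Hq; apply exp_pos).
    exists tau. split; [lra|]. unfold petersson_abs. apply Rmult_lt_0_compat; [lra | nra].
Qed.

(** * Hecke operators *)

(* [sumC g n] is [g 0 + ... + g (n - 1)] ([n] terms, unlike [sum_n]). *)
Fixpoint sumC (g : nat -> C) (n : nat) : C :=
  match n with O => 0%C | S n => (sumC g n + g n)%C end.

Lemma sumC_ext (g h : nat -> C) n : (forall j, (j < n)%nat -> g j = h j) -> sumC g n = sumC h n.
Proof. induction n; intros H; simpl; [reflexivity|]. rewrite IHn, H; auto. Qed.

Lemma sumC_scal_l (x : C) (g : nat -> C) n : sumC (fun j => x * g j)%C n = (x * sumC g n)%C.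
Proof. induction n; simpl; [ring|]. rewrite IHn. ring. Qed.

Lemma sumC_const_1 n : sumC (fun _ => 1%C) n = RtoC (INR n).
Proof. induction n; simpl sumC; [reflexivity|]. rewrite IHn, S_INR, RtoC_plus. reflexivity. Qed.

Lemma sumC_geom (z : C) n : ((z - 1) * sumC (fun j => z ^ j) n)%C = (z ^ n - 1)%C.
Proof. induction n; simpl sumC; [simpl; ring|]. rewrite Cmult_plus_distr_l, IHn. simpl. ring. Qed.

Lemma Cmod_sumC_le (g : nat -> C) n B :
  (forall j, (j < n)%nat -> Cmod (g j) <= B) -> Cmod (sumC g n) <= INR n * B.
Proof.
  induction n; intros H; simpl sumC; [rewrite Cmod_0; simpl; lra|].
  rewrite S_INR. eapply Rle_trans; [apply Cmod_triangle|].
  pose proof (IHn (fun j Hj => H j ltac:(lia))). pose proof (H n ltac:(lia)). lra.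
Qed.

Lemma is_series_sumC (u : nat -> nat -> C) (l : nat -> C) n :
  (forall j, (j < n)%nat -> is_series (u j) (l j)) ->
  is_series (fun k => sumC (fun j => u j k) n) (sumC l n).
Proof.
  induction n; intros H; simpl.
  - apply (is_series_ext (fun _ => zero)); [reflexivity|].
    apply (filterlim_ext (fun _ => zero)); [intros n; symmetry; apply sum_n_m_const_zero|].
    apply filterlim_const.
  - exact (is_series_plus _ _ _ _ (IHn (fun j Hj => H j ltac:(lia))) (H n ltac:(lia))).
Qed.

Lemma sum_roots_of_unity_pow (l k : nat) : (0 < l)%nat ->
  sumC (fun j => q_inf (RtoC (INR j / INR l)) ^ k)%C l =
  if Nat.eqb (k mod l) 0 then RtoC (INR l) else 0%C.
Proof.
  intros Hl. assert (Hl0 : 0 < INR l) by (apply lt_0_INR, Hl).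
  set (z := q_inf (RtoC (INR k / INR l))).
  rewrite (sumC_ext _ (fun j => z ^ j)%C).
  2: { intros j _. unfold z. rewrite !q_inf_pow, <- !RtoC_mult. do 2 f_equal. field. lra. }
  pose proof (Nat.div_mod_eq k l) as Hdm.
  destruct (Nat.eqb_spec (k mod l) 0) as [Hm | Hm].
  - assert (Hz1 : z = 1%C).
    { unfold z. replace (INR k / INR l) with (INR (k / l)); [apply q_inf_nat|].
      rewrite Hm, Nat.add_0_r in Hdm. rewrite Hdm at 2. rewrite mult_INR. field. lra. }
    rewrite Hz1, (sumC_ext _ (fun _ => 1%C)) by (intros j _; apply Cpow_1_l). apply sumC_const_1.
  - assert (Hzl : (z ^ l)%C = 1%C).
    { unfold z. rewrite q_inf_pow, <- RtoC_mult.
      replace (INR l * (INR k / INR l)) with (INR k) by (field; lra). apply q_inf_nat. }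
    assert (Hz1 : (z - 1)%C <> 0%C).
    { apply Cminus_eq_contra. unfold z.
      replace (INR k / INR l) with (INR (k / l) + INR (k mod l) / INR l)
        by (rewrite Hdm at 3; rewrite plus_INR, mult_INR; field; lra).
      rewrite RtoC_plus, q_inf_add, q_inf_nat, Cmult_1_l.
      apply q_inf_frac_neq_1. split; [lia | apply Nat.mod_upper_bound; lia]. }
    rewrite <- (Cmult_1_l (sumC _ l)), <- (Cinv_l _ Hz1), <- Cmult_assoc, sumC_geom, Hzl. ring.
Qed.

(* [stretch l v] is the coefficient sequence of [sum_m v m X^(l m)]. *)
Definition stretch (l : nat) (v : nat -> C) (n : nat) : C :=
  if Nat.eqb (n mod l) 0 then v (n / l)%nat else 0%C.

Lemma sum_n_stretch (l : nat) (v : nat -> C) n : (0 < l)%nat ->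
  sum_n (stretch l v) n = sum_n v (n / l).
Proof.
  intros Hl. induction n as [|n IH].
  - rewrite sum_O. unfold stretch. rewrite Nat.Div0.mod_0_l, Nat.Div0.div_0_l, sum_O. reflexivity.
  - pose proof (Nat.div_mod_eq (S n) l). pose proof (Nat.div_mod_eq n l).
    pose proof (Nat.mod_upper_bound n l ltac:(lia)).
    pose proof (Nat.mod_upper_bound (S n) l ltac:(lia)).
    rewrite sum_Sn, IH by lia. unfold stretch. destruct (Nat.eqb_spec (S n mod l) 0) as [Hm | Hm].
    + replace (S n / l)%nat with (S (n / l)) by nia. rewrite sum_Sn. reflexivity.
    + replace (S n / l)%nat with (n / l)%nat by nia. apply Cplus_0_r.
Qed.

Lemma is_series_stretch (l : nat) (v : nat -> C) S : (0 < l)%nat ->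
  is_series (stretch l v) S <-> is_series v S.
Proof.
  intros Hl. unfold is_series. split; intros H.
  - apply (filterlim_ext (fun m => sum_n (stretch l v) (l * m))).
    { intros m. rewrite sum_n_stretch, Nat.mul_comm, Nat.div_mul by lia. reflexivity. }
    apply (filterlim_comp _ _ _ (fun m => l * m)%nat _ eventually eventually); [|exact H].
    intros P [N HN]. exists N. intros m Hm. apply HN. nia.
  - apply (filterlim_ext (fun n => sum_n v (n / l)));
      [intros n; symmetry; apply sum_n_stretch, Hl|].
    apply (filterlim_comp _ _ _ (fun n => n / l)%nat _ eventually eventually); [|exact H].
    intros P [N HN]. exists (l * N)%nat. intros n Hn. apply HN.
    apply Nat.div_le_lower_bound; lia.
Qed.

Lemma is_series_hecke_average p a l tau : is_cusp_form_wt2 p a -> (0 < l)%nat -> 0 < Im tau ->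
  is_series (fun m => (a (m * l)%nat * q_inf tau ^ m)%C)
    (/ RtoC (INR l) * sumC (fun j => fH a ((tau + RtoC (INR j)) / RtoC (INR l))) l)%C.
Proof.
  intros Hcf Hl Hy.
  assert (Hl0 : 0 < INR l) by (apply lt_0_INR, Hl).
  pose proof (RtoC_INR_neq_0 l Hl) as Hl0'.
  set (w := q_inf (tau / RtoC (INR l))%C).
  set (zeta := fun j : nat => q_inf (RtoC (INR j / INR l))).
  (* the [j]-th translate has q-parameter [w * zeta j]; summing over [j] kills the powers of [w]
     whose exponent is not divisible by [l] *)
  assert (Hs : forall j, (j < l)%nat -> is_series (fun k => (a k * w ^ k * zeta j ^ k)%C)
                   (fH a ((tau + RtoC (INR j)) / RtoC (INR l)))%C).
  { intros j _. eapply is_series_ext; [| apply (fH_is_series p a _ Hcf)].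
    - intros k. unfold w, zeta. rewrite <- Cmult_assoc, <- Cpow_mult_l, <- q_inf_add.
      do 3 f_equal. rewrite RtoC_div by lra. field. exact Hl0'.
    - rewrite Im_div_R by lra. apply Rdiv_lt_0_compat; [|exact Hl0].
      rewrite im_plus, im_RtoC. lra. }
  pose proof (is_series_sumC _ _ l Hs) as Hsum.
  apply (is_series_scal (/ RtoC (INR l))%C) in Hsum.
  apply (is_series_stretch l _ _ Hl). eapply is_series_ext; [| exact Hsum].
  intros k. change (scal ?x ?y) with (x * y)%C. cbn beta. eq_as C.
  rewrite (sumC_scal_l (a k * w ^ k)%C). unfold zeta. rewrite sum_roots_of_unity_pow by exact Hl.
  unfold stretch. destruct (Nat.eqb_spec (k mod l) 0) as [Hm | Hm].
  - pose proof (Nat.div_mod_eq k l) as Hdm. rewrite Hm, Nat.add_0_r in Hdm.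
    assert (Hw : q_inf tau = (w ^ l)%C).
    { unfold w. rewrite q_inf_pow. f_equal. field. exact Hl0'. }
    rewrite Hw, <- Cpow_mult_r, (Nat.mul_comm (k / l)), <- Hdm.
    field. exact Hl0'.
  - ring.
Qed.

Lemma is_series_dilate p a l tau : is_cusp_form_wt2 p a -> (0 < l)%nat -> 0 < Im tau ->
  is_series (stretch l (fun m => (a m * q_inf tau ^ (l * m))%C)) (fH a (RtoC (INR l) * tau)).
Proof.
  intros Hcf Hl Hy. apply (is_series_stretch l _ _ Hl).
  eapply is_series_ext; [| apply (fH_is_series p a _ Hcf)].
  - intros m. cbn beta. rewrite Cpow_mult_r, (q_inf_pow tau l). reflexivity.
  - rewrite im_scal_l. apply Rmult_lt_0_compat; [apply lt_0_INR, Hl | exact Hy].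
Qed.

Definition hecke_image (p l : nat) (a : nat -> C) (tau : C) : C :=
  (/ RtoC (INR l) * sumC (fun j => fH a ((tau + RtoC (INR j)) / RtoC (INR l))) l +
   (if Nat.eqb (p mod l) 0 then 0 else RtoC (INR l) * fH a (RtoC (INR l) * tau)))%C.

Lemma is_series_hecke_coef p l a tau : is_cusp_form_wt2 p a -> (0 < l)%nat -> 0 < Im tau ->
  is_series (fun n => (hecke_coef p l a n * q_inf tau ^ n)%C) (hecke_image p l a tau).
Proof.
  intros Hcf Hl Hy.
  pose proof (is_series_hecke_average p a l tau Hcf Hl Hy) as Havg.
  unfold hecke_image, hecke_coef. destruct (Nat.eqb (p mod l) 0).
  - rewrite Cplus_0_r. eapply is_series_ext; [| exact Havg].
    intros n. cbn beta. rewrite Cplus_0_r. reflexivity.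
  - pose proof (is_series_scal (RtoC (INR l)) _ _ (is_series_dilate p a l tau Hcf Hl Hy)) as Hdil.
    eapply is_series_ext; [| exact (is_series_plus _ _ _ _ Havg Hdil)].
    intros n. change (plus ?x ?y) with (x + y)%C. change (scal ?x ?y) with (x * y)%C.
    unfold stretch. destruct (Nat.eqb_spec (n mod l) 0) as [Hm | Hm].
    + pose proof (Nat.div_mod_eq n l) as Hdm. rewrite Hm, Nat.add_0_r in Hdm.
      rewrite <- Hdm. eq_as C. ring.
    + eq_as C. ring.
Qed.

Lemma petersson_abs_hecke_image_le p l a tau M : (0 < l)%nat -> 0 < Im tau ->
  (forall t, 0 < Im t -> petersson_abs a t <= M) ->
  Im tau * Cmod (hecke_image p l a tau) <= (INR l + 1) * M.
Proof.
  intros Hl Hy HM. assert (Hl0 : 0 < INR l) by (apply lt_0_INR, Hl).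
  assert (HM0 : 0 <= M).
  { eapply Rle_trans; [| exact (HM tau Hy)]. apply Rmult_le_pos; [lra | apply Cmod_ge_0]. }
  assert (Havg : Im tau * Cmod (/ RtoC (INR l) *
            sumC (fun j => fH a ((tau + RtoC (INR j)) / RtoC (INR l))) l)%C <= INR l * M).
  { rewrite Cmod_mult, Cmod_inv, Cmod_INR by exact (RtoC_INR_neq_0 l Hl).
    assert (Hj : forall j, (j < l)%nat ->
               Cmod (fH a ((tau + RtoC (INR j)) / RtoC (INR l))) <= INR l * M / Im tau).
    { intros j _. set (t := ((tau + RtoC (INR j)) / RtoC (INR l))%C).
      assert (Ht : Im t = Im tau / INR l)
        by (unfold t; rewrite Im_div_R, im_plus, im_RtoC by lra; f_equal; ring).
      specialize (HM t ltac:(rewrite Ht; apply Rdiv_lt_0_compat; lra)).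
      unfold petersson_abs in HM. rewrite Ht in HM.
      apply (Rmult_le_reg_l (Im tau / INR l)); [apply Rdiv_lt_0_compat; lra|].
      replace (Im tau / INR l * (INR l * M / Im tau)) with M by (field; lra). exact HM. }
    pose proof (Cmod_sumC_le _ l _ Hj) as Hsum.
    replace (INR l * M) with (Im tau * / INR l * (INR l * (INR l * M / Im tau))) by (field; lra).
    rewrite <- Rmult_assoc. apply Rmult_le_compat_l; [| exact Hsum].
    apply Rmult_le_pos; [lra | apply Rlt_le, Rinv_0_lt_compat, Hl0]. }
  assert (Hdil : Im tau * Cmod (RtoC (INR l) * fH a (RtoC (INR l) * tau))%C <= M).
  { specialize (HM (RtoC (INR l) * tau)%C ltac:(rewrite im_scal_l; apply Rmult_lt_0_compat; lra)).
    unfold petersson_abs in HM. rewrite im_scal_l in HM.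
    rewrite Cmod_mult, Cmod_INR. lra. }
  unfold hecke_image. eapply Rle_trans; [apply Rmult_le_compat_l; [lra | apply Cmod_triangle]|].
  destruct (Nat.eqb (p mod l) 0); [rewrite Cmod_0 |]; lra.
Qed.

Lemma le_of_bound_rescaled_sup {T : Type} (G : T -> R) (P : T -> Prop) (c K : R) : 0 <= K ->
  (exists M, forall t, P t -> G t <= M) -> (exists t0, P t0 /\ 0 < G t0) ->
  (forall M, (forall t, P t -> G t <= M) -> forall t, P t -> c * G t <= K * M) ->
  c <= K.
Proof.
  intros HK [M0 HM0] [t0 [HP0 HG0]] Hmain.
  set (E := fun r => exists t, P t /\ r = G t).
  destruct (completeness E) as [m [Hub Hlub]].
  { exists M0. intros r [t [Ht ->]]. auto. }
  { exists (G t0), t0. auto. }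
  assert (Hm : forall t, P t -> G t <= m) by (intros t Ht; apply Hub; exists t; auto).
  assert (Hmpos : 0 < m) by (pose proof (Hm t0 HP0); lra).
  specialize (Hmain m Hm).
  destruct (Rle_or_lt c K) as [H | H]; [exact H | exfalso].
  (* otherwise [K * m / c] would be an upper bound smaller than the supremum [m] *)
  assert (Hmc : m <= K * m / c).
  { apply Hlub. intros r [t [Ht ->]]. specialize (Hmain t Ht).
    rewrite <- Rle_div_r by lra. rewrite Rmult_comm. exact Hmain. }
  rewrite <- Rle_div_r in Hmc by lra. nra.
Qed.

Lemma hecke_eigenvalue_bound p l a lam : prime (Z.of_nat p) -> is_cusp_form_wt2 p a ->
  a 1%nat = 1%C -> (0 < l)%nat -> (forall n, hecke_coef p l a n = (lam * a n)%C) ->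
  Cmod lam <= INR l + 1.
Proof.
  intros Hpr Hcf Ha1 Hl Hlam.
  apply (le_of_bound_rescaled_sup (petersson_abs a) (fun t => 0 < Im t)).
  - pose proof (pos_INR l). lra.
  - exact (petersson_abs_bounded p a Hpr Hcf).
  - exact (petersson_abs_pos_somewhere p a Hcf Ha1).
  - intros M HM tau Hy.
    assert (E : (lam * fH a tau)%C = hecke_image p l a tau).
    { apply (is_series_C_unique (fun n => hecke_coef p l a n * q_inf tau ^ n)%C);
        [| exact (is_series_hecke_coef p l a tau Hcf Hl Hy)].
      eapply is_series_ext; [| exact (is_series_scal lam _ _ (fH_is_series p a tau Hcf Hy))].
      intros n. rewrite Hlam. change (scal ?x ?y) with (x * y)%C. cbn beta.
      eq_as C. ring. }
    unfold petersson_abs. rewrite <- Rmult_assoc, (Rmult_comm (Cmod lam)), Rmult_assoc,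
      <- Cmod_mult, E.
    exact (petersson_abs_hecke_image_le p l a tau M Hl Hy HM).
Qed.

(** * Coefficient bound and Lipschitz estimate *)

Lemma exists_prime_divisor (n : nat) : (2 <= n)%nat ->
  exists l m, prime (Z.of_nat l) /\ n = (m * l)%nat /\ (1 <= m)%nat.
Proof.
  induction n as [n IH] using lt_wf_ind. intros Hn.
  destruct (prime_dec (Z.of_nat n)) as [Hp | Hp].
  - exists n, 1%nat. split; [exact Hp | split; lia].
  - destruct (not_prime_divide (Z.of_nat n) ltac:(lia) Hp) as [d [Hd [c Hc]]].
    destruct (IH (Z.to_nat d) ltac:(lia) ltac:(lia)) as [l [m [Hl [Hdm Hm]]]].
    exists l, (Z.to_nat c * m)%nat. split; [exact Hl | split; [| nia]].
    assert (Hc0 : (0 <= c)%Z) by nia.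
    apply Nat2Z.inj. rewrite Hc, <- Nat.mul_assoc, <- Hdm, Nat2Z.inj_mul, !Z2Nat.id by lia.
    reflexivity.
Qed.

Lemma hecke_coef_recursion p l a lam m :
  hecke_coef p l a m = (lam * a m)%C ->
  Cmod (a (m * l)%nat) <= Cmod lam * Cmod (a m) + INR l * Cmod (a (m / l)%nat).
Proof.
  intros Hm. unfold hecke_coef in Hm.
  assert (E : a (m * l)%nat = (lam * a m -
     (if Nat.eqb (p mod l) 0 then 0
      else if Nat.eqb (m mod l) 0 then RtoC (INR l) * a (m / l)%nat else 0))%C)
    by (rewrite <- Hm; ring).
  rewrite E. eapply Rle_trans; [apply Cmod_triangle|]. rewrite Cmod_opp, Cmod_mult.
  apply Rplus_le_compat_l.
  pose proof (Rmult_le_pos _ _ (pos_INR l) (Cmod_ge_0 (a (m / l)%nat))).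
  destruct (Nat.eqb (p mod l) 0); [rewrite Cmod_0; lra|].
  destruct (Nat.eqb (m mod l) 0); [rewrite Cmod_mult, Cmod_INR; lra | rewrite Cmod_0; lra].
Qed.

Lemma hecke_recursion_sq_step (l m k x y : R) : 2 <= l -> 0 <= k -> l * k <= m ->
  0 <= y <= k ^ 2 -> x <= (l + 1) * m ^ 2 -> x + l * y <= (m * l) ^ 2.
Proof.
  intros Hl Hk Hlk Hy Hx.
  (* [l * y <= l * k^2 <= m^2 / l <= m^2 / 2] *)
  assert (l * (l * y) <= m ^ 2).
  { apply (Rle_trans _ ((l * k) ^ 2)); [nra|]. apply pow_incr. nra. }
  assert ((l + 2) * m ^ 2 <= l ^ 2 * m ^ 2) by (apply Rmult_le_compat_r; [apply pow2_ge_0 | nra]).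
  nra.
Qed.

Lemma hecke_eigenform_coef_bound p a : prime (Z.of_nat p) -> is_D1 p a ->
  forall n, Cmod (a n) <= INR n ^ 2.
Proof.
  intros Hpr [Hcf [Ha1 Hhecke]]. pose proof Hcf as [Ha0 _].
  intros n. induction n as [n IH] using lt_wf_ind.
  destruct (Nat.lt_ge_cases n 2) as [Hn | Hn].
  { destruct n as [|[|]]; [rewrite Ha0, Cmod_0 | rewrite Ha1, Cmod_1 | lia]; simpl; lra. }
  destruct (exists_prime_divisor n Hn) as [l [m [Hl [-> Hm]]]].
  pose proof (prime_ge_2 _ Hl) as Hl2.
  destruct (Hhecke l Hl) as [lam Hlam].
  pose proof (hecke_eigenvalue_bound p l a lam Hpr Hcf Ha1 ltac:(lia) Hlam) as Hlam_le.
  pose proof (Nat.Div0.mul_div_le m l) as Hmk.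
  pose proof (IH m ltac:(nia)) as Ham.
  pose proof (IH (m / l)%nat ltac:(nia)) as Hamk.
  eapply Rle_trans; [exact (hecke_coef_recursion p l a lam m (Hlam m))|].
  rewrite mult_INR. apply (hecke_recursion_sq_step _ _ (INR (m / l))).
  - apply (le_INR 2). lia.
  - apply pos_INR.
  - rewrite <- mult_INR. apply le_INR, Hmk.
  - split; [apply Cmod_ge_0 | exact Hamk].
  - apply Rmult_le_compat; [apply Cmod_ge_0 | apply Cmod_ge_0 | exact Hlam_le | exact Ham].
Qed.

Lemma Cmod_pow_sub_le (q q' : C) r k : Cmod q <= r -> Cmod q' <= r ->
  Cmod (q' ^ k - q ^ k)%C <= INR k * r ^ (pred k) * Cmod (q' - q)%C.
Proof.
  intros Hq Hq'.
  pose proof (Cmod_ge_0 q). pose proof (Cmod_ge_0 q'). pose proof (Cmod_ge_0 (q' - q)%C).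
  induction k as [|k IH].
  - replace (q' ^ 0 - q ^ 0)%C with (RtoC 0) by (simpl; ring). rewrite Cmod_0. simpl. lra.
  - replace (q' ^ S k - q ^ S k)%C with (q' * (q' ^ k - q ^ k) + q ^ k * (q' - q))%C
      by (simpl; ring).
    eapply Rle_trans; [apply Cmod_triangle|]. rewrite !Cmod_mult, Cmod_pow.
    assert (Hrk : r * (INR k * r ^ pred k) = INR k * r ^ k) by (destruct k; simpl; ring).
    assert (Cmod q ^ k <= r ^ k) by (apply pow_incr; lra).
    assert (Cmod q' * Cmod (q' ^ k - q ^ k)%C <= r * (INR k * r ^ pred k * Cmod (q' - q)%C))
      by (apply Rmult_le_compat; [lra | apply Cmod_ge_0 | lra | exact IH]).
    rewrite S_INR. simpl pred. nra.
Qed.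

Lemma sum_n_sq_pow_le r n : 0 <= r < 1 ->
  sum_n (fun k => INR k ^ 2 * r ^ (pred k)) n <= (1 + r) / (1 - r) ^ 3.
Proof.
  intros Hr. assert (Hd : 0 < (1 - r) ^ 3) by (apply pow_lt; lra).
  (* closed form of the partial sum; the subtracted tail term is nonnegative *)
  set (tail := fun n => r ^ n * ((INR n + 1 - INR n * r) ^ 2 + r) / (1 - r) ^ 3).
  assert (E : sum_n (fun k => INR k ^ 2 * r ^ (pred k)) n = (1 + r) / (1 - r) ^ 3 - tail n).
  { unfold tail. induction n as [|n IH].
    - rewrite sum_O. simpl. field. lra.
    - rewrite sum_Sn, IH. change (plus ?x ?y) with (x + y). rewrite S_INR. simpl pred. simpl pow.
      eq_as R. field. lra. }
  rewrite E. assert (0 <= tail n); [|lra].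
  unfold tail. apply Rdiv_le_0_compat; [| exact Hd].
  apply Rmult_le_pos; [apply pow_le; lra|]. pose proof (pow2_ge_0 (INR n + 1 - INR n * r)). lra.
Qed.

Lemma csum_pow_lipschitz (c : nat -> C) (q q' : C) (r : R) :
  (forall k, Cmod (c k) <= INR k) -> Cmod q <= r -> Cmod q' <= r -> r < 1 ->
  Cmod (csum (fun k => c k * q' ^ k) - csum (fun k => c k * q ^ k))%C
    <= (1 + r) / (1 - r) ^ 3 * Cmod (q' - q)%C.
Proof.
  intros Hc Hq Hq' Hr1. assert (Hr : 0 <= r < 1) by (pose proof (Cmod_ge_0 q); lra).
  assert (Hmaj : forall k, 0 <= INR k ^ 2 * r ^ pred k)
    by (intros k; apply Rmult_le_pos; [apply pow2_ge_0 | apply pow_le; lra]).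
  assert (Hcv : forall w, Cmod w <= r ->
            is_series (fun k => (c k * w ^ k)%C) (csum (fun k => (c k * w ^ k)%C))).
  { intros w Hw. apply csum_correct.
    apply (@ex_series_le C_AbsRing C_CompleteNormedModule _ (fun k => INR k ^ 2 * r ^ pred k)).
    - intros k. change norm with Cmod. rewrite Cmod_mult, Cmod_pow.
      apply Rle_trans with (INR k * r ^ k).
      + apply Rmult_le_compat; [apply Cmod_ge_0 | apply pow_le, Cmod_ge_0 | apply Hc |].
        apply pow_incr. split; [apply Cmod_ge_0 | exact Hw].
      + destruct k as [|k]; [simpl; lra|]. rewrite S_INR, <- tech_pow_Rmult. simpl pred.
        pose proof (pos_INR k). pose proof (pow_le r k ltac:(lra)).
        assert (0 <= (INR k + 1) * r ^ k) by (apply Rmult_le_pos; lra). nra.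
    - apply (ex_series_nonneg_bounded _ _ Hmaj (fun n => sum_n_sq_pow_le r n Hr)). }
  apply (Cmod_series_le _ (fun k => INR k ^ 2 * r ^ pred k * Cmod (q' - q)%C) _ _
           (is_series_minus _ _ _ _ (Hcv q' Hq') (Hcv q Hq))).
  - intros k.
    change (Cmod (c k * q' ^ k - c k * q ^ k)%C <= INR k ^ 2 * r ^ pred k * Cmod (q' - q)%C).
    replace (c k * q' ^ k - c k * q ^ k)%C with (c k * (q' ^ k - q ^ k))%C by ring.
    rewrite Cmod_mult. replace (INR k ^ 2 * r ^ pred k * Cmod (q' - q)%C)
      with (INR k * (INR k * r ^ pred k * Cmod (q' - q)%C)) by ring.
    apply Rmult_le_compat; [apply Cmod_ge_0 | apply Cmod_ge_0 | apply Hc |].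
    apply Cmod_pow_sub_le; assumption.
  - intros n. rewrite (sum_n_mult_r (K := R_Ring)). change (mult ?x ?y) with (x * y).
    apply Rmult_le_compat_r; [apply Cmod_ge_0 | apply sum_n_sq_pow_le, Hr].
Qed.

Lemma mu_inf_lipschitz_on_disc p a (rad L : R) : prime (Z.of_nat p) -> is_D1 p a ->
  (forall r, 0 <= r < rad -> r < 1 /\ (1 + r) / (1 - r) ^ 3 <= L) ->
  forall q q', Cmod q < rad -> Cmod q' < rad ->
  Cmod (mu_inf a q' - mu_inf a q)%C <= L * Cmod (q' - q)%C.
Proof.
  intros Hpr HD HL q q' Hq Hq'.
  set (r := Rmax (Cmod q) (Cmod q')).
  assert (Hr : 0 <= r < rad)
    by (unfold r; split; [apply (Rle_trans _ _ _ (Cmod_ge_0 q)), Rmax_l | apply Rmax_lub_lt; lra]).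
  destruct (HL r Hr) as [Hr1 HLr].
  eapply Rle_trans; [apply csum_pow_lipschitz; [| apply Rmax_l | apply Rmax_r | exact Hr1]|].
  - intros k. destruct k as [|k].
    + destruct HD as [[Ha0 _] _]. rewrite Ha0. unfold Cdiv. rewrite Cmult_0_l, Cmod_0. simpl; lra.
    + pose proof (hecke_eigenform_coef_bound p a Hpr HD (S k)) as Hk.
      pose proof (lt_0_INR (S k) ltac:(lia)).
      rewrite Cmod_div, Cmod_INR by exact (RtoC_INR_neq_0 (S k) ltac:(lia)).
      apply Rle_div_l; [lra|]. nra.
  - apply Rmult_le_compat_r; [apply Cmod_ge_0 | exact HLr].
Qed.

Lemma Cmod_mu_0_sub p a q q' :
  Cmod (mu_0 p a q' - mu_0 p a q)%C = Cmod (mu_inf a q' - mu_inf a q)%C.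
Proof.
  replace (mu_0 p a q' - mu_0 p a q)%C with (RtoC (al_sign p a) * (mu_inf a q' - mu_inf a q))%C
    by (unfold mu_0, mu_inf; ring).
  rewrite Cmod_mult, Cmod_R.
  replace (Rabs (al_sign p a)) with 1; [ring|].
  unfold al_sign, Rabs. destruct excluded_middle_informative; destruct Rcase_abs; lra.
Qed.

Lemma lipschitz_const_small r : 0 <= r < 1 / 100 -> r < 1 /\ (1 + r) / (1 - r) ^ 3 <= 7.
Proof.
  intros Hr. split; [lra|]. apply Rle_div_l; [apply pow_lt; lra|].
  assert ((99 / 100) ^ 3 <= (1 - r) ^ 3) by (apply pow_incr; lra). lra.
Qed.

Lemma lipschitz_const_near_1 (P r : R) : 2 <= P -> 0 <= r < 1 - 1 / (2 * P) ->
  r < 1 /\ (1 + r) / (1 - r) ^ 3 <= 96 * P ^ 4.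
Proof.
  intros HP Hr. assert (Hpos : 0 < 1 / (2 * P) <= 1 / 4).
  { split; [apply Rdiv_lt_0_compat; lra|]. apply Rle_div_l; lra. }
  split; [lra|]. apply Rle_div_l; [apply pow_lt; lra|].
  assert (Hcube : (1 / (2 * P)) ^ 3 <= (1 - r) ^ 3) by (apply pow_incr; lra).
  (* [96 P^4 / (2 P)^3 = 12 P >= 2 > 1 + r] *)
  apply Rmult_le_compat_l with (r := 96 * P ^ 4) in Hcube; [| pose proof (pow_le P 4); nra].
  replace (96 * P ^ 4 * (1 / (2 * P)) ^ 3) with (12 * P) in Hcube by (field; lra). lra.
Qed.

Theorem mainTheorem5 (p : nat) :
  prime (Z.of_nat p) -> (1 <= genus_X0 p)%nat ->
  (forall a : nat -> C, is_D1 p a ->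
     forall q q' : C, Cmod q < 1 / 100 -> Cmod q' < 1 / 100 ->
       Cmod (mu_inf a q' - mu_inf a q) <= 7 * Cmod (q' - q)) /\
  (forall a : nat -> C, is_D1 p a ->
     forall q q' : C, Cmod q < 1 - 1 / (2 * INR p) -> Cmod q' < 1 - 1 / (2 * INR p) ->
       Cmod (mu_0 p a q' - mu_0 p a q) <= 96 * INR p ^ 4 * Cmod (q' - q)) /\
  (forall a : nat -> C, is_D1 p a ->
     forall q q' : C, Cmod q < 1 / 200 -> Cmod q' < 1 / 200 ->
       Cmod (mu_inf a q' - mu_inf a q) <= 7 * Cmod (q' - q)) /\
  (forall a : nat -> C, is_D1 p a ->
     forall q q' : C, Cmod q < 1 - 1 / INR p -> Cmod q' < 1 - 1 / INR p ->
       Cmod (mu_0 p a q' - mu_0 p a q) <= 96 * INR p ^ 4 * Cmod (q' - q)).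
Proof.
  intros Hpr _.
  assert (HP : 2 <= INR p) by (apply (le_INR 2); pose proof (prime_ge_2 _ Hpr); lia).
  assert (Hdisc : 1 - 1 / INR p <= 1 - 1 / (2 * INR p)).
  { enough (1 / (2 * INR p) <= 1 / INR p) by lra.
    apply Rmult_le_compat_l; [lra | apply Rinv_le_contravar; lra]. }
  assert (Hinf : forall a, is_D1 p a -> forall q q', Cmod q < 1 / 100 -> Cmod q' < 1 / 100 ->
            Cmod (mu_inf a q' - mu_inf a q) <= 7 * Cmod (q' - q))
    by (intros a HD; apply (mu_inf_lipschitz_on_disc p a (1 / 100)); [exact Hpr | exact HD |];
        exact lipschitz_const_small).
  assert (Hzero : forall a, is_D1 p a ->
            forall q q', Cmod q < 1 - 1 / (2 * INR p) -> Cmod q' < 1 - 1 / (2 * INR p) ->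
            Cmod (mu_0 p a q' - mu_0 p a q) <= 96 * INR p ^ 4 * Cmod (q' - q)).
  { intros a HD q q' Hq Hq'. rewrite Cmod_mu_0_sub.
    apply (mu_inf_lipschitz_on_disc p a (1 - 1 / (2 * INR p))); try assumption.
    intros r Hr. apply lipschitz_const_near_1; assumption. }
  split; [exact Hinf | split; [exact Hzero | split]].
  - intros a HD q q' Hq Hq'. apply Hinf; [exact HD | lra | lra].
  - intros a HD q q' Hq Hq'. apply Hzero; [exact HD | lra | lra].
Qed.
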